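(* Let $d\ge1$ and let $\varphi^1,\dots,\varphi^{d+1}\in\mathbb{R}^d$ satisfy $\|\varphi^j\|_2=1$ for all $j$ (Euclidean norm) and $\langle\varphi^i,\varphi^j\rangle=-\frac1d$ for all $1\le i\neq j\le d+1$. Let $B_2=\{x\in\mathbb{R}^d:\|x\|_2\le1\}$ and $B^o_2(x)=\{y:\|y-x\|_2<1\}$. Then there exists $a>0$ such that $$B_2\subset\bigcup_{j=1}^{d+1}B^o_2(a\varphi^j).$$ *)

From HB Require Import structures.
From mathcomp Require Import all_boot all_order all_algebra.
From mathcomp Require Import reals.
Set Implicit Arguments. Unset Strict Implicit. Unset Printing Implicit Defensive.
Import Order.TTheory GRing.Theory Num.Theory.
Local Open Scope ring_scope.

Definition dotv (R : realType) (d : nat) (x y : 'rV[R]_d) : R :=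
  \sum_(i < d) x 0 i * y 0 i.

Definition norm2 (R : realType) (d : nat) (x : 'rV[R]_d) : R :=
  Num.sqrt (dotv x x).

From HB Require Import structures.
From mathcomp Require Import all_boot all_order all_algebra.
From mathcomp Require Import reals.
From mathcomp Require Import ring lra.
Set Implicit Arguments. Unset Strict Implicit. Unset Printing Implicit Defensive.
Import Order.TTheory GRing.Theory Num.Theory.
Local Open Scope ring_scope.

(* The vertices phi_j of a regular simplex form a tight frame:
   |x|^2 = d/(d+1) * sum_j <x, phi_j>^2, and sum_j <x, phi_j> = 0.  Hence
   m := max_j <x, phi_j> satisfies |x| <= d m, so for a = 1/(2d) and the
   maximising j, |x - a phi_j|^2 = |x|^2 - 2 a m + a^2 < 1 whenever |x| <= 1. *)

Section Dotv.
Variables (R : realType) (d : nat).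
Implicit Types (x y z : 'rV[R]_d).

Lemma dotvC x y : dotv x y = dotv y x.
Proof. by apply: eq_bigr => i _; rewrite mulrC. Qed.

Lemma dotvDl x y z : dotv (x + y) z = dotv x z + dotv y z.
Proof. by rewrite /dotv -big_split; apply: eq_bigr => i _; rewrite mxE mulrDl. Qed.

Lemma dotvZl a x z : dotv (a *: x) z = a * dotv x z.
Proof. by rewrite /dotv mulr_sumr; apply: eq_bigr => i _; rewrite mxE mulrA. Qed.

Lemma dotv0l z : dotv 0 z = 0.
Proof. by rewrite /dotv big1 // => i _; rewrite mxE mul0r. Qed.

Lemma dotvBl x y z : dotv (x - y) z = dotv x z - dotv y z.
Proof. by rewrite dotvDl -scaleN1r dotvZl mulN1r. Qed.

Lemma dotvZr a x z : dotv z (a *: x) = a * dotv z x.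
Proof. by rewrite !(dotvC z) dotvZl. Qed.

Lemma dotvBr x y z : dotv z (x - y) = dotv z x - dotv z y.
Proof. by rewrite !(dotvC z) dotvBl. Qed.

Lemma dotv_subZ a x y :
  dotv (x - a *: y) (x - a *: y) = dotv x x - 2 * a * dotv x y + a ^+ 2 * dotv y y.
Proof. by rewrite dotvBl !dotvBr !dotvZl !dotvZr (dotvC y); ring. Qed.

Lemma dotv_suml (I : finType) (F : I -> 'rV[R]_d) z :
  dotv (\sum_i F i) z = \sum_i dotv (F i) z.
Proof. exact: (big_morph (fun v => dotv v z) (fun u v => dotvDl u v z) (dotv0l z)). Qed.

Lemma dotvv_ge0 x : 0 <= dotv x x.
Proof. by apply: sumr_ge0 => i _; rewrite -expr2 sqr_ge0. Qed.

Lemma dotvv_eq0 x : dotv x x = 0 -> x = 0.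
Proof.
move=> x0; apply/rowP => i; rewrite mxE.
have sq0 : \sum_(j < d) x 0 j ^+ 2 = 0.
  by rewrite -[RHS]x0; apply: eq_bigr => j _; rewrite expr2.
have := psumr_eq0P (P := predT) (fun j _ => sqr_ge0 (x 0 j)) sq0 (erefl true : predT i).
by move=> /eqP; rewrite sqrf_eq0 => /eqP.
Qed.

Lemma norm2_le1 x : (norm2 x <= 1) = (dotv x x <= 1).
Proof. by rewrite /norm2 -{1}sqrtr1 ler_sqrt ?ler01. Qed.

Lemma norm2_lt1 x : (norm2 x < 1) = (dotv x x < 1).
Proof. by rewrite /norm2 -{1}sqrtr1 ltr_sqrt ?ltr01. Qed.

End Dotv.

Section RealInequalities.
Variable R : realFieldType.

Lemma max_ge0_of_sum0 (n : nat) (t : 'I_n.+1 -> R) (m : R) :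
  \sum_i t i = 0 -> (forall i, t i <= m) -> 0 <= m.
Proof.
move=> t0 le_tm; have : \sum_i t i <= \sum_(i < n.+1) m by exact: ler_sum.
by rewrite t0 sumr_const card_ord -mulr_natr pmulr_lge0.
Qed.

(* Each -t_i is the sum of the n other terms, hence at most n m; and
   sum_i t_i^2 = sum_i (m - t_i) (- t_i). *)
Lemma sum_sqr_le_of_sum0 (n : nat) (t : 'I_n.+1 -> R) (m : R) :
  \sum_i t i = 0 -> (forall i, t i <= m) ->
  \sum_i t i ^+ 2 <= n%:R * n.+1%:R * m ^+ 2.
Proof.
move=> t0 le_tm.
have Nt_le i : - t i <= n%:R * m.
  have -> : - t i = \sum_(j | j != i) t j.
    by move: t0; rewrite (bigD1 i) //= => /eqP; rewrite addr_eq0 => /eqP ->;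
       rewrite opprK.
  apply: le_trans (ler_sum _ (fun j _ => le_tm j)) _.
  by rewrite sumr_const cardC1 card_ord mulr_natl.
have -> : \sum_i t i ^+ 2 = \sum_i (m - t i) * - t i.
  under [RHS]eq_bigr do rewrite mulrN mulrBl opprB.
  by rewrite sumrB -mulr_sumr t0 mulr0 subr0; apply: eq_bigr => i _; rewrite expr2.
have -> : n%:R * n.+1%:R * m ^+ 2 = \sum_i (m - t i) * (n%:R * m).
  by rewrite -mulr_suml sumrB t0 subr0 sumr_const card_ord; ring.
apply: ler_sum => i _; apply: ler_wpM2l; last exact: Nt_le.
by rewrite subr_ge0.
Qed.

(* As s <= 1, e^2 s <= m^2 gives e s <= m, whence
   s - e m + (e/2)^2 <= s (1 - e^2) + e^2/4 < 1. *)
Lemma shifted_sqnorm_lt1 (e s m : R) :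
  0 < e -> e <= 1 -> 0 <= s -> s <= 1 -> 0 <= m -> e ^+ 2 * s <= m ^+ 2 ->
  s - 2 * (e / 2) * m + (e / 2) ^+ 2 < 1.
Proof.
move=> e_gt0 e_le1 s_ge0 s_le1 m_ge0 le_sm.
have le_esm : e * s <= m by nra.
have le_s1 : s * (1 - e ^+ 2) <= 1 - e ^+ 2.
  by apply: ler_piMl s_le1; rewrite subr_ge0 expr_le1 // ltW.
have -> : s - 2 * (e / 2) * m + (e / 2) ^+ 2 = s - e * m + e ^+ 2 / 4 by field.
nra.
Qed.

End RealInequalities.

Section RegularSimplex.
Variables (R : realType) (d : nat) (phi : 'I_d.+1 -> 'rV[R]_d).
Hypotheses (d_gt0 : (0 < d)%N) (phi_unit : forall j, norm2 (phi j) = 1).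
Hypothesis phi_dot :
  forall i j : 'I_d.+1, i != j -> dotv (phi i) (phi j) = - (d%:R)^-1.

Local Notation k := (d%:R^-1 : R).
Local Notation c := (d%:R / (d%:R + 1) : R).

Let d_neq0 : d%:R != 0 :> R.
Proof. by rewrite pnatr_eq0 -lt0n. Qed.

Let d1_neq0 : d%:R + 1 != 0 :> R.
Proof. by rewrite gt_eqF // addr_gt0 // ltr0n. Qed.

Lemma simplex_unit j : dotv (phi j) (phi j) = 1.
Proof.
have := phi_unit j; rewrite /norm2 => /(congr1 (fun r => r ^+ 2)).
by rewrite sqr_sqrtr ?dotvv_ge0 // expr1n.
Qed.

Lemma simplex_gram i j : dotv (phi i) (phi j) = (i == j)%:R * (1 + k) - k.
Proof.
case: eqVneq => [<-|/phi_dot->]; last by rewrite mul0r sub0r.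
by rewrite simplex_unit mul1r addrK.
Qed.

Lemma simplex_gram_sum i : \sum_j dotv (phi i) (phi j) = 0.
Proof.
under eq_bigr do rewrite simplex_gram.
rewrite sumrB sumr_const card_ord -mulr_suml (bigD1 i) //= eqxx big1.
  by rewrite addr0 mul1r -mulr_natr; field.
by move=> j /negbTE; rewrite eq_sym => ->.
Qed.

Lemma simplex_sum0 : \sum_j phi j = 0.
Proof.
apply: dotvv_eq0; rewrite dotv_suml big1 // => i _.
rewrite dotvC dotv_suml -[RHS](simplex_gram_sum i).
by apply: eq_bigr => j _; rewrite dotvC.
Qed.

(* The first d vertices are a basis: their Gram matrix (1 + k) I - k J has the
   explicit inverse c (I + J). *)
Lemma simplex_orthogonal_eq0 y : (forall j, dotv y (phi j) = 0) -> y = 0.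
Proof.
move=> y_perp.
pose w := widen_ord (leqnSn d).
pose A : 'M[R]_d := \matrix_(i, l) phi (w i) 0 l.
pose H : 'M[R]_d := \matrix_(i, l) (c * ((i == l)%:R + 1)).
have gramA i l : (A *m A^T) i l = dotv (phi (w i)) (phi (w l)).
  by rewrite !mxE; apply: eq_bigr => m _; rewrite !mxE.
have gram_sumA i : \sum_j dotv (phi (w i)) (phi (w j)) = k.
  have := simplex_gram_sum (w i); rewrite big_ord_recr /= phi_dot.
    by move/eqP; rewrite subr_eq0 => /eqP ->.
  by rewrite -val_eqE /= neq_ltn ltn_ord.
have gramAH : (A *m A^T) *m H = 1%:M.
  apply/matrixP => i l; rewrite mxE [RHS]mxE.
  under eq_bigr do rewrite gramA mxE mulrCA mulrDr mulr1.
  rewrite -mulr_sumr big_split /= gram_sumA (bigD1 l) //= eqxx mulr1 big1.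
    rewrite addr0 simplex_gram.
    have -> : (w i == w l) = (i == l) by [].
    by field; rewrite d_neq0 d1_neq0.
  by move=> j /negbTE ->; rewrite mulr0.
have HA : (A^T *m H) *m A = 1%:M by apply: mulmx1C; rewrite mulmxA.
have yA : y *m A^T = 0.
  apply/rowP => i; rewrite !mxE -[RHS](y_perp (w i)).
  by apply: eq_bigr => m _; rewrite !mxE.
by rewrite -(mulmx1 y) -HA !mulmxA yA !mul0mx.
Qed.

Lemma simplex_dotv_sum0 x : \sum_j dotv x (phi j) = 0.
Proof.
by under eq_bigr do rewrite dotvC; rewrite -dotv_suml simplex_sum0 dotv0l.
Qed.

Lemma simplex_frame x : x = c *: \sum_j dotv x (phi j) *: phi j.
Proof.
apply/eqP; rewrite -subr_eq0; apply/eqP/simplex_orthogonal_eq0 => l.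
rewrite dotvBl dotvZl dotv_suml.
under eq_bigr do rewrite dotvZl simplex_gram mulrBr mulrA.
rewrite sumrB -!mulr_suml simplex_dotv_sum0 mul0r subr0.
rewrite (bigD1 l) //= eqxx mulr1 big1 ?addr0; first by field; rewrite d_neq0 d1_neq0.
by move=> j /negbTE ->; rewrite mulr0.
Qed.

Lemma simplex_dotvv x : dotv x x = c * \sum_j dotv x (phi j) ^+ 2.
Proof.
rewrite {1}(simplex_frame x) dotvZl dotv_suml; congr (_ * _).
by apply: eq_bigr => j _; rewrite dotvZl dotvC expr2.
Qed.

Lemma simplex_max_dotv x :
  exists j, 0 <= dotv x (phi j) /\ dotv x x <= (d%:R * dotv x (phi j)) ^+ 2.
Proof.
pose t j := dotv x (phi j).
case: (@arg_maxP _ _ _ ord0 xpredT t erefl) => j _ t_max.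
have {}t_max i : t i <= t j by exact: t_max.
exists j; split; first exact: max_ge0_of_sum0 (simplex_dotv_sum0 x) t_max.
have c_ge0 : 0 <= c by rewrite divr_ge0 // addr_ge0.
have := ler_wpM2l c_ge0 (sum_sqr_le_of_sum0 (simplex_dotv_sum0 x) t_max).
rewrite -simplex_dotvv => /le_trans; apply.
by rewrite -natr1 [leLHS](_ : _ = (d%:R * t j) ^+ 2) ?lexx //; field.
Qed.

End RegularSimplex.

Theorem proposition3p4 (R : realType) (d : nat) (hd : (1 <= d)%N)
  (phi : 'I_d.+1 -> 'rV[R]_d)
  (hunit : forall j, norm2 (phi j) = 1)
  (hdot : forall i j : 'I_d.+1, i != j -> dotv (phi i) (phi j) = - (d%:R)^-1) :
  exists a : R, 0 < a /\
    forall x : 'rV[R]_d, norm2 x <= 1 ->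
      exists j : 'I_d.+1, norm2 (x - a *: phi j) < 1.
Proof.
pose e : R := d%:R^-1.
have e_gt0 : 0 < e by rewrite invr_gt0 ltr0n.
exists (e / 2); split => [|x]; first by rewrite divr_gt0.
rewrite norm2_le1 => x_le1.
have [j [m_ge0 le_xm]] := simplex_max_dotv hd hunit hdot x.
exists j; rewrite norm2_lt1 dotv_subZ (simplex_unit hunit) mulr1.
apply: shifted_sqnorm_lt1 => //; first by rewrite invf_le1 ?ler1n ?ltr0n.
  exact: dotvv_ge0.
apply: le_trans (ler_wpM2l (sqr_ge0 e) le_xm) _.
by rewrite -exprMn mulrA mulVf ?mul1r // pnatr_eq0 -lt0n.
Qed.
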